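(* Let $n,k\ge 1$ be integers, let $\mathcal{D}$ be a set, and let $h_1,\dots,h_k:\mathcal{D}\to\{0,1\}$ be indicator functions such that $\sum_{j=1}^k h_j(d)=1$ for all $d\in\mathcal{D}$ (so each data point belongs to exactly one class). Let $\alpha\in(0,\frac1k]$ and let $X=(D_1,\dots,D_n)$ be a random database whose entries $D_1,\dots,D_n$ are independent (not necessarily identically distributed) and satisfy $P_{D_i}(\{d\in\mathcal{D}: h_j(d)=1\})\ge\alpha$ for all $i\in[n]$ and $j\in[k]$. Let $b>0$ and let $N_1,\dots,N_k$ be i.i.d. Laplace random variables with mean $0$ and scale $b$ (density $\frac{1}{2b}e^{-|t|/b}$), independent of $X$. Define the output $Y^k=(Y_1,\dots,Y_k)$ by $$Y_j=\sum_{i=1}^n h_j(D_i)+N_j,\qquad j\in[k].$$ Then for every $i\in[n]$ and every $y^k\in\mathbb{R}^k$, $$\ell(D_i\to y^k)\le \frac{2}{b}-\log\Big(1-\alpha+\alpha\exp\big(\tfrac{2}{b}\big)\Big),$$ where $\ell(D_i\to y^k)=\log\sup_{d\in\mathcal{D}}\frac{M_{Y\mid D_i}(y^k\mid d)}{M_Y(y^k)}$, with $M_{Y\mid D_i}(\cdot\mid d)$ the conditional density of $Y^k$ given $D_i=d$ and $M_Y$ the marginal density of $Y^k$.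
   Context: $\log$ denotes the natural logarithm and $[n]=\{1,\dots,n\}$. The quantity $\ell(D_i\to y^k)$ is the pointwise maximal leakage from the $i$-th record $D_i$ to the outcome $y^k$ of the mechanism; the densities involved are with respect to Lebesgue measure on $\mathbb{R}^k$, with the randomness of the other records $D_{i'}$, $i'\ne i$, and of the noise integrated out. *)

From HB Require Import structures.
From mathcomp Require Import all_boot all_order all_algebra.
From mathcomp Require Import all_classical all_reals all_analysis.
Set Implicit Arguments. Unset Strict Implicit. Unset Printing Implicit Defensive.
Import Order.TTheory GRing.Theory Num.Theory.
Local Open Scope classical_set_scope.
Local Open Scope ring_scope.

Definition mutually_independent (R : realType) (dO : measure_display)
  (Omega : measurableType dO) (P : probability Omega R)
  (dD : measure_display) (D : measurableType dD) (n : nat)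
  (X : 'I_n -> Omega -> D) : Prop :=
  forall (I : {set 'I_n}) (A : 'I_n -> set D),
    (forall i, i \in I -> measurable (A i)) ->
    P (\big[setI/setT]_(i in I) (X i @^-1` A i)) =
    (\prod_(i in I) P (X i @^-1` A i))%E.

Definition laplace_pdf (R : realType) (b t : R) : R :=
  (2 * b)^-1 * expR (- `|t| / b).

(* Marginal density of Y^k at y: the Laplace noise (independent of the
   database) is integrated out analytically, the database is integrated
   out w.r.t. P. *)
Definition density_Y (R : realType) (dO : measure_display)
  (Omega : measurableType dO) (P : probability Omega R)
  (dD : measure_display) (D : measurableType dD) (n k : nat)
  (h : 'I_k -> D -> bool) (X : 'I_n -> Omega -> D) (b : R) (y : 'I_k -> R) : R :=
  fine (\int[P]_w (\prod_(j < k)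
      laplace_pdf b (y j - \sum_(i < n) ((h j (X i w) : nat)%:R)))%:E).

(* Conditional density of Y^k at y given D_i = d: the other records and the
   noise are integrated out. *)
Definition cond_density_Y (R : realType) (dO : measure_display)
  (Omega : measurableType dO) (P : probability Omega R)
  (dD : measure_display) (D : measurableType dD) (n k : nat)
  (h : 'I_k -> D -> bool) (X : 'I_n -> Omega -> D) (b : R) (i : 'I_n)
  (y : 'I_k -> R) (d : D) : R :=
  fine (\int[P]_w (\prod_(j < k)
      laplace_pdf b (y j - (h j d : nat)%:R
                     - \sum_(i' < n | i' != i) ((h j (X i' w) : nat)%:R)))%:E).

(* Pointwise maximal leakage  l(D_i -> y) = log sup_d M(y|d) / M(y),
   valued in the extended reals (log(+oo) = +oo). *)
Definition pml (R : realType) (dO : measure_display)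
  (Omega : measurableType dO) (P : probability Omega R)
  (dD : measure_display) (D : measurableType dD) (n k : nat)
  (h : 'I_k -> D -> bool) (X : 'I_n -> Omega -> D) (b : R) (i : 'I_n)
  (y : 'I_k -> R) : \bar R :=
  let s := ereal_sup [set (cond_density_Y P h X b i y d / density_Y P h X b y)%:E
                      | d in [set: D]] in
  match s with
  | r%:E => (ln r)%:E
  | _ => s
  end.

From HB Require Import structures.
From mathcomp Require Import all_boot all_order all_algebra.
From mathcomp Require Import all_classical all_reals all_analysis.
From mathcomp Require Import measurable_realfun ring lra.

(* Let f be the product Laplace density, e(x) the one-hot class vector of a
   record x, and u = y minus the class counts of the records other than i.
   Then M(y) = E[f(u - e(D_i))] and M(y | d) = E[f(u - e(d))].  Two one-hot
   vectors are at l1-distance 0 or 2, so pointwise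
     f(u - e(D_i)) >= (c + (1 - c) [D_i and d in the same class]) f(u - e(d))
   with c = exp(-2/b).  As D_i is independent of u, taking expectations gives
   M(y) >= (c + (1 - c) alpha) M(y | d), and -log (c + (1 - c) alpha) is the
   claimed bound. *)

Set Implicit Arguments.
Unset Strict Implicit.
Unset Printing Implicit Defensive.

Import Order.TTheory GRing.Theory Num.Theory.
Local Open Scope classical_set_scope.
Local Open Scope ring_scope.

Lemma integral_sum_indic (R : realType) (d : measure_display)
    (T : measurableType d) (mu : {finite_measure set T -> \bar R})
    (I : finType) (A : {pred I}) (a : I -> R) (S : I -> set T) :
  (forall t, 0 <= a t) -> (forall t, measurable (S t)) ->
  (\int[mu]_x (\sum_(t in A) a t * \1_(S t) x)%:E =
   (\sum_(t in A) a t * fine (mu (S t)))%:E)%E.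
Proof.
move=> a_ge0 mS.
under eq_integral do rewrite -sumEFin -big_filter.
rewrite ge0_integral_sum //; first last.
- by move=> t x _; rewrite lee_fin mulr_ge0.
- by move=> t; apply/measurable_EFinP/measurable_funM => //; apply: measurable_indic.
rewrite big_filter -sumEFin; apply: eq_bigr => t _.
rewrite (integralZl_indic _ (fun=> S t)) //; last by rewrite ltNge a_ge0.
by rewrite integral_indic // setIT EFinM fineK ?fin_num_measure.
Qed.

Section LaplaceShift.
Variables (R : realType) (b : R).
Hypothesis hb : 0 < b.

Lemma laplace_pdf_ge0 t : 0 <= laplace_pdf b t.
Proof. by rewrite /laplace_pdf mulr_ge0 ?expR_ge0 // invr_ge0 mulr_ge0 // ltW. Qed.

Lemma laplace_pdf_shift u x x' :
  expR (- `|x - x'| / b) * laplace_pdf b (u - x') <= laplace_pdf b (u - x).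
Proof.
rewrite /laplace_pdf mulrCA; apply: ler_wpM2l; first by rewrite invr_ge0 mulr_ge0 ?ltW.
rewrite -expRD ler_expR -mulrDl ler_pM2r ?invr_gt0 // lerNr opprD !opprK.
have -> : u - x = (u - x') + (x' - x) by rewrite addrA subrK.
by rewrite (le_trans (ler_normD _ _)) // [leRHS]addrC (distrC x).
Qed.

Lemma prod_laplace_pdf_shift (k : nat) (u x x' : 'I_k -> R) :
  expR (- (\sum_(j < k) `|x j - x' j|) / b) * \prod_(j < k) laplace_pdf b (u j - x' j)
  <= \prod_(j < k) laplace_pdf b (u j - x j).
Proof.
rewrite -sumrN mulr_suml expR_sum -big_split /=; apply: ler_prod => j _.
by rewrite mulr_ge0 ?expR_ge0 ?laplace_pdf_ge0 ?laplace_pdf_shift.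
Qed.

End LaplaceShift.

Section Classes.
Variables (D : Type) (k : nat) (hk : (0 < k)%N) (h : 'I_k -> D -> bool).
Hypothesis hpart : forall x, (\sum_(j < k) (h j x : nat))%N = 1%N.

Definition class_of (x : D) : 'I_k := odflt (Ordinal hk) [pick j | h j x].

Lemma h_class x j : h j x = (class_of x == j).
Proof.
rewrite /class_of; case: pickP => [j0 hj0 | hnone] /=; last first.
  by have := hpart x; rewrite big1 // => j0 _; rewrite hnone.
have [<- // | ne] := eqVneq j0 j; apply/negP => hj; have := hpart x.
by rewrite (bigD1 j0) //= (bigD1 j) 1?eq_sym //= hj0 hj.
Qed.

Lemma sum_dist_indicator_le2 (R : numDomainType) x x' :
  \sum_(j < k) `|(h j x)%:R - (h j x')%:R| <= 2 :> R.
Proof.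
apply: (@le_trans _ _ (\sum_(j < k) ((h j x)%:R + (h j x')%:R))).
  by apply: ler_sum => j _; rewrite (le_trans (ler_normB _ _)) // !normr_nat.
by rewrite big_split /= -!natr_sum !hpart.
Qed.

Lemma prod_laplace_pdf_class (R : realType) (b : R) (u : 'I_k -> R) x x' :
  0 < b ->
  (expR (- (2 / b)) + (1 - expR (- (2 / b))) * (class_of x == class_of x')%:R)
    * \prod_(j < k) laplace_pdf b (u j - (h j x')%:R)
  <= \prod_(j < k) laplace_pdf b (u j - (h j x)%:R).
Proof.
move=> hb; have [same | diff] := eqVneq (class_of x) (class_of x').
  rewrite mulr1 subrKC mul1r (eq_bigr (fun j => laplace_pdf b (u j - (h j x)%:R))) //.
  by move=> j _; rewrite !h_class same.
rewrite mulr0 addr0.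
apply: le_trans (prod_laplace_pdf_shift hb u (fun j => (h j x)%:R) (fun j => (h j x')%:R)).
apply: ler_wpM2r; first by apply: prodr_ge0 => j _; apply: laplace_pdf_ge0.
by rewrite ler_expR !mulNr lerN2 ler_pM2r ?invr_gt0 ?sum_dist_indicator_le2.
Qed.

End Classes.

Section Leakage.
Variables (R : realType) (dO : measure_display) (Omega : measurableType dO)
  (P : probability Omega R) (dD : measure_display) (D : measurableType dD)
  (n k : nat) (hk : (0 < k)%N) (h : 'I_k -> D -> bool).
Hypothesis hmeas : forall j, measurable [set x | h j x].
Hypothesis hpart : forall x, (\sum_(j < k) (h j x : nat))%N = 1%N.
Variable X : 'I_n -> Omega -> D.
Hypothesis Xmeas : forall i, measurable_fun setT (X i).

Local Notation class_of := (class_of hk h).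
Local Notation h_class := (h_class hk hpart).

(* The integrands see the database only through the classes of its records,
   so they are finite combinations of indicators of the events [cfg_event I t]:
   expectations become finite sums, which is how independence (postulated for
   events only) is used.  Records outside [I] are pinned to a dummy class. *)
Definition cfg (I : {set 'I_n}) (w : Omega) : {ffun 'I_n -> 'I_k} :=
  [ffun i => if i \in I then class_of (X i w) else Ordinal hk].

Definition cfg_range (I : {set 'I_n}) : {pred {ffun 'I_n -> 'I_k}} :=
  [pred t : {ffun _ -> _} | [forall i, (i \notin I) ==> (t i == Ordinal hk)]].

Definition cfg_event (I : {set 'I_n}) (t : {ffun 'I_n -> 'I_k}) : set Omega :=
  \big[setI/setT]_(i in I) (X i @^-1` [set x | h (t i) x]).

Lemma cfg_in_range I w : cfg I w \in cfg_range I.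
Proof. by apply/forallP => i; apply/implyP => iNI; rewrite ffunE (negbTE iNI). Qed.

Lemma in_cfg_event I t w :
  cfg_event I t w <-> forall i, i \in I -> h (t i) (X i w).
Proof.
split=> [Ew i iI | Ht].
  by move: Ew; rewrite /cfg_event (bigD1 i) //= => -[].
by rewrite /cfg_event; apply: (big_ind (fun S : set Omega => S w)).
Qed.

Lemma cfg_eventP I t w : t \in cfg_range I -> cfg_event I t w <-> cfg I w = t.
Proof.
move=> /forallP t_range; rewrite in_cfg_event; split=> [Ht | <- i iI].
  apply/ffunP => i; rewrite ffunE; case: ifPn => [iI | iNI].
    by apply/eqP; rewrite -h_class ?Ht.
  by apply/esym/eqP; move/implyP: (t_range i); apply.
by rewrite ffunE iI h_class.
Qed.

Lemma measurable_cfg_event I t : measurable (cfg_event I t).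
Proof.
rewrite /cfg_event; apply: big_ind => //; first exact: measurableI.
by move=> i _; rewrite -[X i @^-1` _]setTI; apply: Xmeas.
Qed.

Lemma sum_cfg_indic I (g : {ffun 'I_n -> 'I_k} -> R) w :
  \sum_(t in cfg_range I) g t * \1_(cfg_event I t) w = g (cfg I w).
Proof.
rewrite (bigD1 (cfg I w)) ?cfg_in_range //= big1 ?addr0.
  by rewrite indicE mem_set ?mulr1 // cfg_eventP ?cfg_in_range.
move=> t /andP[t_range tNcfg]; rewrite indicE memNset ?mulr0 //.
by rewrite cfg_eventP // => cfgE; rewrite cfgE eqxx in tNcfg.
Qed.

Lemma measurable_fun_cfg I (g : {ffun 'I_n -> 'I_k} -> R) :
  measurable_fun setT (fun w => g (cfg I w)).
Proof.
rewrite (_ : (fun w => _) = fun w => \sum_(t <- [seq t <- index_enum _ | t \in cfg_range I])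
    g t * \1_(cfg_event I t) w); last by apply/funext => w; rewrite big_filter sum_cfg_indic.
apply: measurable_sum => t; apply: measurable_funM => //.
by apply: measurable_indic; apply: measurable_cfg_event.
Qed.

Lemma integral_cfg_indic I (g : {ffun 'I_n -> 'I_k} -> R) (A : set Omega) :
  measurable A -> (forall t, 0 <= g t) ->
  (\int[P]_w (g (cfg I w) * \1_A w)%:E =
   (\sum_(t in cfg_range I) g t * fine (P (A `&` cfg_event I t)))%:E)%E.
Proof.
move=> mA g_ge0; rewrite -integral_sum_indic //; last first.
  by move=> t; apply: measurableI => //; apply: measurable_cfg_event.
apply: eq_integral => w _; rewrite -sum_cfg_indic mulr_suml.
by congr EFin; apply: eq_bigr => t _; rewrite indicI -mulrA [X in _ * X]mulrC.
Qed.

Lemma integral_cfg I (g : {ffun 'I_n -> 'I_k} -> R) : (forall t, 0 <= g t) ->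
  (\int[P]_w (g (cfg I w))%:E =
   (\sum_(t in cfg_range I) g t * fine (P (cfg_event I t)))%:E)%E.
Proof.
move=> g_ge0; under eq_bigr do rewrite -[cfg_event I _]setTI.
rewrite -integral_cfg_indic //; apply: eq_integral => w _.
by rewrite indicT mulr1.
Qed.

Hypothesis Xindep : mutually_independent P X.
Variables (b : R) (i : 'I_n) (y : 'I_k -> R).
Hypothesis hb : 0 < b.

Lemma measure_indep_cfg_event (A : set D) t : measurable A ->
  P (X i @^-1` A `&` cfg_event [set~ i]%SET t) =
  (P (X i @^-1` A) * P (cfg_event [set~ i]%SET t))%E.
Proof.
move=> mA; pose B i' := if i' == i then A else [set x | h (t i') x].
have mB i' : measurable (B i') by rewrite /B; case: eqP.
have B_other i' : i' \in [set~ i]%SET -> B i' = [set x | h (t i') x].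
  by rewrite in_setC1 /B => /negbTE ->.
have -> : cfg_event [set~ i]%SET t =
    \big[setI/setT]_(i' in [set~ i]%SET) X i' @^-1` B i'.
  by apply: eq_bigr => i' /B_other ->.
rewrite (@Xindep _ B (fun i' _ => mB i')).
have := @Xindep [set: 'I_n]%SET B (fun i' _ => mB i').
rewrite (big_setD1 i) ?finset.in_setT //= [X in (_ = X)%E -> _](big_setD1 i) ?finset.in_setT //=.
by rewrite finset.setTD /B eqxx.
Qed.

Definition likelihood (t : {ffun 'I_n -> 'I_k}) : R :=
  \prod_(j < k) laplace_pdf b (y j - \sum_(i' < n) ((t i' == j) : nat)%:R).

Definition cond_likelihood (d : D) (t : {ffun 'I_n -> 'I_k}) : R :=
  \prod_(j < k) laplace_pdf b
    (y j - (h j d : nat)%:R - \sum_(i' < n | i' != i) ((t i' == j) : nat)%:R).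

Lemma likelihood_ge0 t : 0 <= likelihood t.
Proof. by apply: prodr_ge0 => j _; apply: laplace_pdf_ge0. Qed.

Lemma cond_likelihood_ge0 d t : 0 <= cond_likelihood d t.
Proof. by apply: prodr_ge0 => j _; apply: laplace_pdf_ge0. Qed.

Lemma likelihood_cfg w :
  likelihood (cfg [set: 'I_n]%SET w) =
  \prod_(j < k) laplace_pdf b (y j - \sum_(i' < n) (h j (X i' w) : nat)%:R).
Proof.
apply: eq_bigr => j _; congr (laplace_pdf b (_ - _)); apply: eq_bigr => i' _.
by rewrite ffunE finset.in_setT h_class.
Qed.

Lemma cond_likelihood_cfg d w :
  cond_likelihood d (cfg [set~ i]%SET w) =
  \prod_(j < k) laplace_pdf b
    (y j - (h j d : nat)%:R - \sum_(i' < n | i' != i) (h j (X i' w) : nat)%:R).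
Proof.
apply: eq_bigr => j _; congr (laplace_pdf b (_ - _)); apply: eq_bigr => i' i'Ni.
by rewrite ffunE in_setC1 i'Ni h_class.
Qed.

Lemma likelihood_cfg_ge_cond d w :
  (expR (- (2 / b)) + (1 - expR (- (2 / b)))
     * \1_(X i @^-1` [set x | h (class_of d) x]) w)
    * cond_likelihood d (cfg [set~ i]%SET w)
  <= likelihood (cfg [set: 'I_n]%SET w).
Proof.
rewrite likelihood_cfg cond_likelihood_cfg indicE.
rewrite (_ : (w \in _) = (class_of (X i w) == class_of d)); last first.
  by rewrite -h_class; apply/idP/idP; rewrite in_setE.
pose u j := y j - \sum_(i' < n | i' != i) (h j (X i' w) : nat)%:R.
have -> : \prod_(j < k) laplace_pdf b (y j - \sum_(i' < n) (h j (X i' w) : nat)%:R) =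
    \prod_(j < k) laplace_pdf b (u j - (h j (X i w) : nat)%:R).
  by apply: eq_bigr => j _; rewrite (bigD1 i) //= opprD addrA addrAC.
have -> : \prod_(j < k) laplace_pdf b
    (y j - (h j d : nat)%:R - \sum_(i' < n | i' != i) (h j (X i' w) : nat)%:R) =
    \prod_(j < k) laplace_pdf b (u j - (h j d : nat)%:R).
  by apply: eq_bigr => j _; rewrite addrAC.
exact: prod_laplace_pdf_class.
Qed.

Lemma density_Y_cfg :
  (density_Y P h X b y)%:E = (\int[P]_w (likelihood (cfg [set: 'I_n]%SET w))%:E)%E.
Proof.
rewrite /density_Y (eq_integral (fun w => (likelihood (cfg [set: 'I_n]%SET w))%:E)).
  by rewrite integral_cfg //; apply: likelihood_ge0.
by move=> w _; rewrite likelihood_cfg.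
Qed.

Lemma cond_density_Y_cfg d :
  cond_density_Y P h X b i y d =
  \sum_(t in cfg_range [set~ i]%SET) cond_likelihood d t * fine (P (cfg_event [set~ i]%SET t)).
Proof.
rewrite /cond_density_Y (eq_integral (fun w => (cond_likelihood d (cfg [set~ i]%SET w))%:E)).
  by rewrite integral_cfg //; apply: cond_likelihood_ge0.
by move=> w _; rewrite cond_likelihood_cfg.
Qed.

Lemma cond_density_Y_ge0 d : 0 <= cond_density_Y P h X b i y d.
Proof.
rewrite cond_density_Y_cfg; apply: sumr_ge0 => t _.
by rewrite mulr_ge0 ?cond_likelihood_ge0 ?fine_ge0 ?measure_ge0.
Qed.

Lemma integral_mix_cond_likelihood (c : R) (A : set D) d :
  0 <= c <= 1 -> measurable A ->
  (\int[P]_w ((c + (1 - c) * \1_(X i @^-1` A) w)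
               * cond_likelihood d (cfg [set~ i]%SET w))%:E =
   ((c + (1 - c) * fine (P (X i @^-1` A))) * cond_density_Y P h X b i y d)%:E)%E.
Proof.
move=> /andP[c_ge0 c_le1] mA; set A' := X i @^-1` A; set Ic := [set~ i]%SET.
have mA' : measurable A' by rewrite -[A']setTI; apply: Xmeas.
pose G (a : R) t := a * cond_likelihood d t.
have G_ge0 (a : R) : 0 <= a -> forall t, 0 <= G a t.
  by move=> a_ge0 t; rewrite mulr_ge0 ?cond_likelihood_ge0.
have GB_ge0 a B : 0 <= a -> forall w, (0 <= (G a (cfg Ic w) * \1_B w)%:E)%E.
  by move=> a_ge0 w; rewrite lee_fin mulr_ge0 ?G_ge0.
have mGB a B : measurable B ->
    measurable_fun setT (fun w => (G a (cfg Ic w) * \1_B w)%:E).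
  by move=> mB; apply/measurable_EFinP; apply: measurable_funM => //; apply: measurable_fun_cfg.
have c'_ge0 : 0 <= 1 - c by rewrite subr_ge0.
rewrite (eq_integral (fun w => (G c (cfg Ic w) * \1_setT w)%:E
    + (G (1 - c) (cfg Ic w) * \1_A' w)%:E)%E); last first.
  by move=> w _; rewrite indicT /= -EFinD /G; congr EFin; ring.
rewrite ge0_integralD //; last 4 first.
- by move=> w _; apply: GB_ge0.
- exact: mGB.
- by move=> w _; apply: GB_ge0.
- exact: mGB.
rewrite (integral_cfg_indic _ measurableT (G_ge0 _ c_ge0)).
rewrite (integral_cfg_indic _ mA' (G_ge0 _ c'_ge0)) cond_density_Y_cfg -EFinD.
congr EFin; rewrite mulrDl !mulr_sumr -!big_split /=; apply: eq_bigr => t _.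
have mE := measurable_cfg_event Ic t.
rewrite setTI measure_indep_cfg_event // fineM ?fin_num_measure //.
by rewrite /G /A' /Ic; ring.
Qed.

Variable alpha : R.
Hypothesis Xclass : forall j, (alpha%:E <= P (X i @^-1` [set x | h j x]))%E.

Lemma density_Y_ge_cond d :
  (expR (- (2 / b)) + (1 - expR (- (2 / b))) * alpha) * cond_density_Y P h X b i y d
  <= density_Y P h X b y.
Proof.
set c := expR (- (2 / b)); set A := [set x | h (class_of d) x].
have c01 : 0 <= c <= 1.
  by rewrite /c expR_ge0 /= -expR0 ler_expR oppr_le0 divr_ge0 // ltW.
have mA' : measurable (X i @^-1` A).
  by rewrite -[_ @^-1` _]setTI; apply: Xmeas => //; apply: hmeas.
have alpha_le : alpha <= fine (P (X i @^-1` A)).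
  by rewrite -lee_fin fineK ?fin_num_measure //; apply: Xclass.
apply: (@le_trans _ _ ((c + (1 - c) * fine (P (X i @^-1` A))) * cond_density_Y P h X b i y d)).
  apply: ler_wpM2r; first exact: cond_density_Y_ge0.
  by rewrite lerD2l ler_wpM2l // subr_ge0; case/andP: c01.
rewrite -lee_fin density_Y_cfg -(integral_mix_cond_likelihood d c01 (hmeas _)).
have [c_ge0 c_le1] := andP c01.
apply: ge0_le_integral => //.
- move=> w _; rewrite lee_fin mulr_ge0 ?cond_likelihood_ge0 //.
  by rewrite addr_ge0 // mulr_ge0 // subr_ge0.
- apply/measurable_EFinP; apply: measurable_funM; last exact: measurable_fun_cfg.
  by apply: measurable_funD => //; apply: measurable_funM.
- exact/measurable_EFinP/measurable_fun_cfg.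
- by move=> w _; rewrite lee_fin; apply: likelihood_cfg_ge_cond.
Qed.

End Leakage.

Lemma divr_le_inv (R : realFieldType) (K C r : R) :
  0 < K -> 0 <= C -> K * C <= r -> C / r <= K^-1.
Proof.
move=> K_gt0 C_ge0 KC_le; have [-> | r_neq0] := eqVneq r 0.
  by rewrite invr0 mulr0 invr_ge0 ltW.
have r_gt0 : 0 < r by rewrite lt_def r_neq0 /= (le_trans _ KC_le) // mulr_ge0 // ltW.
by rewrite ler_pdivrMr // ler_pdivlMl.
Qed.

Lemma ln_inv_mix (R : realType) (x a : R) : 0 <= x -> 0 <= a ->
  ln (expR (- x) + (1 - expR (- x)) * a)^-1 = x - ln (1 - a + a * expR x).
Proof.
move=> x_ge0 a_ge0.
have -> : expR (- x) + (1 - expR (- x)) * a = expR (- x) * (1 - a + a * expR x).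
  by rewrite mulrDr mulrCA -expRD addNr expR0; ring.
have m_gt0 : 0 < 1 - a + a * expR x.
  have : a <= a * expR x by rewrite ler_peMr // -expR0 ler_expR.
  lra.
by rewrite lnV ?posrE ?mulr_gt0 ?expR_gt0 // lnM ?posrE ?expR_gt0 // expRK opprD opprK.
Qed.

Lemma ln_ereal_sup_le (R : realType) (S : set (\bar R)) (r : R) :
  1 <= r -> (forall x, S x -> (x <= r%:E)%E) ->
  (match ereal_sup S with x%:E => (ln x)%:E | _ => ereal_sup S end <= (ln r)%:E)%E.
Proof.
move=> r_ge1 S_le; have := ge_ereal_sup S_le.
case: (ereal_sup S) => [x | // | _] /=; last exact: leNye.
rewrite !lee_fin => x_le.
have [x_gt0 | x_le0] := ltrP 0 x; first by rewrite ler_ln ?posrE // (lt_le_trans x_gt0).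
by rewrite ln0 // ln_ge0.
Qed.

Theorem theorem1 (R : realType) (dO : measure_display)
  (Omega : measurableType dO) (P : probability Omega R)
  (dD : measure_display) (D : measurableType dD) (n k : nat)
  (hn : (0 < n)%N) (hk : (0 < k)%N)
  (h : 'I_k -> D -> bool)
  (hmeas : forall j, measurable [set d | h j d])
  (hpart : forall d, (\sum_(j < k) (h j d : nat))%N = 1%N)
  (alpha : R) (halpha0 : 0 < alpha) (halpha1 : alpha <= (k%:R)^-1)
  (X : 'I_n -> Omega -> D)
  (Xmeas : forall i, measurable_fun setT (X i))
  (Xindep : mutually_independent P X)
  (Xclass : forall i j, (alpha%:E <= P (X i @^-1` [set d | h j d]))%E)
  (b : R) (hb : 0 < b) :
  forall (i : 'I_n) (y : 'I_k -> R),
    (pml P h X b i y <= (2 / b - ln (1 - alpha + alpha * expR (2 / b)))%:E)%E.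
Proof.
move=> i y.
set c := expR (- (2 / b)); set K := c + (1 - c) * alpha.
have c_lt1 : c < 1 by rewrite expR_lt1 oppr_lt0 divr_gt0.
have alpha_le1 : alpha <= 1.
  by apply: le_trans halpha1 _; rewrite invf_le1 ?ler1n ?ltr0n.
have K_gt0 : 0 < K by rewrite addr_gt0 ?expR_gt0 // mulr_gt0 // subr_gt0.
have K_le1 : K <= 1.
  have : (1 - c) * alpha <= 1 - c by rewrite ler_piMr // subr_ge0 ltW.
  by rewrite /K; lra.
have two_b_ge0 : 0 <= 2 / b by rewrite divr_ge0 // ltW.
rewrite /pml -(ln_inv_mix two_b_ge0 (ltW halpha0)).
apply: ln_ereal_sup_le; first by rewrite invf_ge1.
move=> _ [d _ <-]; rewrite lee_fin; apply: divr_le_inv K_gt0 _ _.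
  exact: cond_density_Y_ge0.
apply: density_Y_ge_cond => //; apply: Xclass.
Qed.
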